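(* For every integer $d\ge3$, the number of binomials of degree $d$ in the set $\mathcal{G}'=\{g^{\mathbf{s}}:\mathbf{s}\in\{1,2\}^n,n\in\mathbb{N}_0\}$ equals the Fibonacci number $F_{d-3}$.
   Context: Fibonacci numbers: $F_0=0$, $F_1=1$, $F_{n+2}=F_{n+1}+F_n$. The binomials live in $R=\mathbb{K}[x_{i,i+1},x_{i,i+2}: i\in\mathbb{N}]$ ($\mathbb{K}$ a field). Let $E=\{[i,i+1],[i,i+2]:i\in\mathbb{N}\}$, totally ordered by $[i,j]\le[k,l]$ iff $i\le k$ and $j\le l$. For a binomial $g=\prod x_{i,j}^{u_{i,j}}-\prod x_{i,j}^{v_{i,j}}$, $w_g([i,j])=u_{i,j}-v_{i,j}$; a finitely supported $w:E\to\mathbb{Z}$ has associated binomial $\prod x_{i,j}^{\max(w([i,j]),0)}-\prod x_{i,j}^{\max(-w([i,j]),0)}$. A vertex $n$ is adjacent to $g$ if $n\in\{i,j\}$ for some $[i,j]$ with $w_g([i,j])\ne0$. Let $g^{\emptyset}=x_{1,2}x_{3,5}^2x_{6,7}-x_{1,3}x_{2,3}x_{5,6}x_{5,7}$; recursively, for $\mathbf{s}=(s_1,\dots,s_n)$ with $w=w_{g^{\mathbf{s}}}$ and $k$ the largest vertex adjacent to $g^{\mathbf{s}}$, $g^{(s_1,\dots,s_n,1)}$ is the binomial of the weight $[i,j]\mapsto w([i,j])$ if $[i,j]\le[k-4,k-2]$, $2w([i,j])$ if $[i,j]=[k-2,k]$, $-w([i-2,j-2])$ if $[i,j]\ge[k,k+1]$,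 $0$ otherwise; and $g^{(s_1,\dots,s_n,2)}$ is the binomial of the weight $[i,j]\mapsto w([i,j])$ if $[i,j]\le[k-4,k-2]$, $2w([i,j])$ if $[i,j]=[k-2,k-1]$, $-2w([k-2,k-1])$ if $[i,j]=[k-1,k+1]$, $w([i-3,j-3])$ if $[i,j]\ge[k+1,k+2]$, $0$ otherwise. *)

From mathcomp Require Import all_boot all_order all_algebra.
Set Implicit Arguments. Unset Strict Implicit. Unset Printing Implicit Defensive.
Import Order.TTheory GRing.Theory Num.Theory.
Local Open Scope ring_scope.

Fixpoint fib (n : nat) : nat :=
  match n with
  | 0 => 0
  | 1 => 1
  | (m.+1 as p).+1 => (fib p + fib m)%N
  end.

(* Edges of E: (i, false) encodes [i, i+1] (variable x_{i,i+1}),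
               (i, true)  encodes [i, i+2] (variable x_{i,i+2}). *)
Definition edge := (nat * bool)%type.
Definition esrc (e : edge) : nat := e.1.
Definition etgt (e : edge) : nat := (e.1 + (if e.2 then 2 else 1))%N.

Definition edge_le (e f : edge) : bool := (esrc e <= esrc f)%N && (etgt e <= etgt f)%N.

(* A weight w : E -> Z (a binomial is identified with its weight: the binomial
   associated to w is prod x^{max(w,0)} - prod x^{max(-w,0)}). *)
Definition weight := edge -> int.

Definition adjacent (w : weight) (n : nat) : Prop :=
  exists e : edge, w e != 0 /\ (n = esrc e \/ n = etgt e).

Definition largest_adjacent (w : weight) (k : nat) : Prop :=
  adjacent w k /\ forall n, adjacent w n -> (n <= k)%N.

(* weight of g^emptyset = x12 x35^2 x67 - x13 x23 x56 x57 *)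
Definition g0 : weight := fun e =>
  match e with
  | (1, false)%N => 1
  | (3, true)%N => 2
  | (6, false)%N => 1
  | (1, true)%N => -1
  | (2, false)%N => -1
  | (5, false)%N => -1
  | (5, true)%N => -1
  | _ => 0
  end.

(* the weight of g^(s,1), given w = w_{g^s} and k its largest adjacent vertex *)
Definition step1 (w : weight) (k : nat) : weight := fun e =>
  if edge_le e ((k - 4)%N, true) then w e
  else if e == ((k - 2)%N, true) then 2 * w e
  else if edge_le (k, false) e then - w ((e.1 - 2)%N, e.2)
  else 0.

Definition step2 (w : weight) (k : nat) : weight := fun e =>
  if edge_le e ((k - 4)%N, true) then w e
  else if e == ((k - 2)%N, false) then 2 * w e
  else if e == ((k - 1)%N, true) then - (2 * w ((k - 2)%N, false))
  else if edge_le (k.+1, false) e then w ((e.1 - 3)%N, e.2)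
  else 0.

Inductive gs : seq nat -> weight -> Prop :=
  | gs_nil : gs [::] g0
  | gs_1 s w k : gs s w -> largest_adjacent w k -> gs (rcons s 1%N) (step1 w k)
  | gs_2 s w k : gs s w -> largest_adjacent w k -> gs (rcons s 2%N) (step2 w k).

Definition in_Gprime (w : weight) : Prop := exists s, gs s w.

Definition posp (x : int) : nat := if 0 <= x then `|x|%N else 0%N.
Definition negp (x : int) : nat := if x < 0 then `|x|%N else 0%N.

(* The binomial of w has (total) degree d: with N bounding the support of w,
   d is the maximum of the degrees of its two monomials. *)
Definition has_degree (w : weight) (d : nat) : Prop :=
  exists N : nat, (forall e : edge, (N <= e.1)%N -> w e = 0) /\
    d = maxn (\sum_(i < N) (posp (w (val i, false)) + posp (w (val i, true))))%N
             (\sum_(i < N) (negp (w (val i, false)) + negp (w (val i, true))))%N.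

From mathcomp Require Import all_boot all_order all_algebra zify.
From Stdlib Require Import FunctionalExtensionality.
Set Implicit Arguments. Unset Strict Implicit. Unset Printing Implicit Defensive.
Import GRing.Theory.
Local Open Scope ring_scope.

(* Every g^s, with largest adjacent vertex k, ends in the same pattern: the
   edges out of k-3 carry weight 0, both edges out of k-2 carry a sign sg, and
   [k-1,k] carries -sg.  Steps 1 and 2 preserve this pattern (flipping sg, resp.
   keeping it) and add 1, resp. 2, to the degree of both monomials, so
   deg g^s = 4 + sum s.  The pattern also exposes the last letter of s (the
   weight of [k-5,k-4] vanishes after step 1 but not after step 2) and the
   previous binomial, so s |-> g^s is injective.  The binomials of degree d thus
   correspond to the compositions of d-4 into parts 1 and 2, and there are
   F_(d-3) of those. *)

Lemma ordinal_enumeration (T : eqType) (U : Type) (s : seq T) (g : T -> U) :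
  uniq s -> {in s &, injective g} ->
  exists f : 'I_(size s) -> U, injective f /\
    forall u, (exists2 x, x \in s & g x = u) <-> exists i, f i = u.
Proof.
move=> s_uniq g_inj; exists (fun i => g (tnth (in_tuple s) i)); split.
- move=> i j /g_inj eq_ij; apply: (elimT (tuple_uniqP (in_tuple s)) s_uniq).
  by apply: eq_ij; exact: mem_tnth.
- move=> u; split=> [[x xs <-] | [i <-]].
    by have /tnthP [i ->] : x \in in_tuple s := xs; exists i.
  by exists (tnth (in_tuple s) i); first exact: mem_tnth.
Qed.

Definition in12 (t : nat) : bool := (t == 1)%N || (t == 2)%N.

(* The compositions of m - 1, and none for m = 0: the shift makes the
   recursion that of fib. *)
Fixpoint comp12 (m : nat) : seq (seq nat) :=
  match m with
  | 0 => [::]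
  | 1 => [:: [::]]
  | (n.+1 as p).+1 => map (cons 1%N) (comp12 p) ++ map (cons 2%N) (comp12 n)
  end.

Lemma comp12SS m :
  comp12 m.+2 = map (cons 1%N) (comp12 m.+1) ++ map (cons 2%N) (comp12 m).
Proof. by []. Qed.

Lemma size_comp12 m : size (comp12 m) = fib m.
Proof.
suff : size (comp12 m) = fib m /\ size (comp12 m.+1) = fib m.+1 by case.
elim: m => [|m [IHm IHm1]] //; split=> //.
by rewrite comp12SS size_cat !size_map IHm IHm1.
Qed.

Lemma mem_map_cons (T : eqType) (a x : T) (s : seq T) (X : seq (seq T)) :
  (x :: s \in map (cons a) X) = (x == a) && (s \in X).
Proof.
elim: X => [|y X IH] /=; first by rewrite andbF.
by rewrite !in_cons IH eqseq_cons andb_orr.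
Qed.

Lemma mem_comp12 m s : (s \in comp12 m) = all in12 s && ((sumn s).+1 == m).
Proof.
elim: s m => [|x s IH] [|[|m]] //; rewrite ?comp12SS ?mem_cat.
- by apply/norP; split; apply/mapP => -[].
- by rewrite andbF.
- by rewrite mem_seq1; case: x => [|x]; rewrite ?andbF.
- rewrite !mem_map_cons !IH /in12.
  by case: x => [|[|[|x]]] //=; rewrite ?orbF ?andbF // add1n eqSS.
Qed.

Lemma uniq_comp12 m : uniq (comp12 m).
Proof.
suff : uniq (comp12 m) /\ uniq (comp12 m.+1) by case.
elim: m => [|m [IHm IHm1]] //; split=> //.
rewrite comp12SS cat_uniq !map_inj_uniq ?IHm ?IHm1 //=; try by move=> ? ? [].
by rewrite andbT has_map; apply/hasPn => s _ /=; rewrite mem_map_cons.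
Qed.

Lemma step1E w m i b : (0 < m)%N -> step1 w m.+3 (i, b) =
  if (i < m)%N then w (i, b)
  else if (i == m.+1) && b then 2 * w (i, b)
  else if (m.+3 <= i)%N then - w ((i - 2)%N, b) else 0.
Proof.
move=> m_gt0; rewrite /step1 /edge_le /esrc /etgt /= xpair_eqE.
by case: b => /=; repeat (case: ifP => //=); lia.
Qed.

Lemma step2E w m i b : (0 < m)%N -> step2 w m.+3 (i, b) =
  if (i < m)%N then w (i, b)
  else if (i == m.+1) && ~~ b then 2 * w (i, b)
  else if (i == m.+2) && b then - (2 * w (m.+1, false))
  else if (m.+3 < i)%N then w ((i - 3)%N, b) else 0.
Proof.
move=> m_gt0; rewrite /step2 /edge_le /esrc /etgt /= !xpair_eqE.
by case: b => /=; repeat (case: ifP => //=); lia.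
Qed.

Ltac decide_ifs :=
  repeat first [ rewrite ifT; [|by lia] | rewrite ifF; [|by lia] ].

(* The rows m, m+1, m+2 (row i holding the weights of [i,i+1] and [i,i+2]) read
   (0 0), (sg sg), (-sg 0), and nothing lies beyond; m+3 is then the largest
   adjacent vertex. *)
Definition tail_form (w : weight) (m : nat) (sg : int) : Prop :=
  [/\ (4 <= m)%N, sg = 1 \/ sg = -1,
      forall b, w (m, b) = 0,
      [/\ w (m.+1, false) = sg, w (m.+1, true) = sg,
          w (m.+2, false) = - sg & w (m.+2, true) = 0]
    & forall e : edge, (m.+3 <= e.1)%N -> w e = 0].

Lemma tail_form_g0 : tail_form g0 4 (-1).
Proof.
split=> //; first by right.
by move=> [i b] /= i_ge7; case: i i_ge7 => [|[|[|[|[|[|[|i]]]]]]] // _; case: b.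
Qed.

Lemma tail_form_step1 w m sg :
  tail_form w m sg -> tail_form (step1 w m.+3) m.+2 (- sg).
Proof.
case=> m_ge4 sg_pm1 w0 [w1f w1t w2f w2t] w_supp.
split; [lia | by case: sg_pm1 => ->; [right | left] | move=> b | split | ].
all: try move=> [i b] /= i_ge.
all: rewrite step1E; last lia; decide_ifs; rewrite ?subSS ?subn0.
all: try (case: b => /=; decide_ifs).
all: rewrite ?w1f ?w1t ?w2f ?w2t ?w0 ?oppr0 ?opprK ?mulr0 //.
all: by rewrite w_supp ?oppr0 //=; lia.
Qed.

Lemma tail_form_step2 w m sg :
  tail_form w m sg -> tail_form (step2 w m.+3) m.+3 sg.
Proof.
case=> m_ge4 sg_pm1 w0 [w1f w1t w2f w2t] w_supp.
split=> //; [lia | move=> b | split | ].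
all: try move=> [i b] /= i_ge.
all: rewrite step2E; last lia; decide_ifs; rewrite ?subSS ?subn0.
all: try (case: b => /=; decide_ifs).
all: rewrite ?w1f ?w1t ?w2f ?w2t ?w0 ?oppr0 ?opprK ?mulr0 //.
all: by rewrite w_supp //=; lia.
Qed.

Lemma tail_form_largest_adjacent w m sg :
  tail_form w m sg -> largest_adjacent w m.+3.
Proof.
case=> _ sg_pm1 _ [_ w1t _ w2t] w_supp; split.
  exists (m.+1, true); rewrite w1t /esrc /etgt /=.
  by split; [case: sg_pm1 => -> | right; lia].
move=> n [[i b] [w_i n_i]]; rewrite /esrc /etgt /= in n_i.
have i_lt : (i < m.+3)%N by apply: contraTltn w_i => i_ge; rewrite w_supp.
case: b w_i n_i => w_i n_i; last lia.
have i_ne : i != m.+2 by apply: contraNneq w_i => ->; rewrite w2t.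
lia.
Qed.

Lemma largest_adjacent_uniq w k1 k2 :
  largest_adjacent w k1 -> largest_adjacent w k2 -> k1 = k2.
Proof. by move=> [adj1 max1] [adj2 max2]; apply/eqP; rewrite eqn_leq max1 ?max2. Qed.

Definition monomial_degree (part : int -> nat) (w : weight) (N : nat) : nat :=
  (\sum_(i < N) (part (w (val i, false)) + part (w (val i, true))))%N.

Lemma monomial_degree_step1 part w m sg : part = posp \/ part = negp ->
  tail_form w m sg ->
  monomial_degree part (step1 w m.+3) m.+2.+3 = (monomial_degree part w m.+3).+1.
Proof.
move=> part_pn [m_ge4 sg_pm1 w0 [w1f w1t w2f w2t] _].
have step1_low b (i : 'I_m) : step1 w m.+3 (val i, b) = w (val i, b).
  by rewrite step1E ?ltn_ord //; lia.
rewrite /monomial_degree !big_ord_recr /=.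
under eq_bigr => i _ do rewrite !step1_low.
rewrite !step1E; try lia; decide_ifs; rewrite ?subSS ?subn0.
rewrite ?w0 ?w1f ?w1t ?w2f ?w2t.
by case: part_pn => ->; case: sg_pm1 => ->; rewrite /posp /negp /=; lia.
Qed.

Lemma monomial_degree_step2 part w m sg : part = posp \/ part = negp ->
  tail_form w m sg ->
  monomial_degree part (step2 w m.+3) m.+3.+3 = (monomial_degree part w m.+3 + 2)%N.
Proof.
move=> part_pn [m_ge4 sg_pm1 w0 [w1f w1t w2f w2t] _].
have step2_low b (i : 'I_m) : step2 w m.+3 (val i, b) = w (val i, b).
  by rewrite step2E ?ltn_ord //; lia.
rewrite /monomial_degree !big_ord_recr /=.
under eq_bigr => i _ do rewrite !step2_low.
rewrite !step2E; try lia; decide_ifs; rewrite ?subSS ?subn0.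
rewrite ?w0 ?w1f ?w1t ?w2f ?w2t.
by case: part_pn => ->; case: sg_pm1 => ->; rewrite /posp /negp /=; lia.
Qed.

Lemma monomial_degree_widen part w N M : part 0 = 0%N ->
  (forall e : edge, (N <= e.1)%N -> w e = 0) -> (N <= M)%N ->
  monomial_degree part w M = monomial_degree part w N.
Proof.
move=> part0 w_supp N_le_M; rewrite /monomial_degree.
rewrite (big_ord_widen _ (fun i => part (w (i, false)) + part (w (i, true)))%N N_le_M).
rewrite [RHS]big_mkcond; apply: eq_bigr => i _.
by case: ltnP => // N_le_i; rewrite !w_supp ?part0.
Qed.

Lemma has_degreeE w N d : (forall e : edge, (N <= e.1)%N -> w e = 0) ->
  has_degree w d <->
  d = maxn (monomial_degree posp w N) (monomial_degree negp w N).
Proof.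
move=> w_supp; split=> [[M [w_supp' ->]] | ->]; last by exists N.
have same_degree part : part 0 = 0%N ->
    monomial_degree part w M = monomial_degree part w N.
  move=> part0; rewrite -(monomial_degree_widen part0 w_supp' (leq_maxr N M)).
  exact: (monomial_degree_widen part0 w_supp (leq_maxl N M)).
rewrite -[LHS]/(maxn (monomial_degree posp w M) (monomial_degree negp w M)).
by rewrite !same_degree.
Qed.

Lemma tail_form_eq w w' m sg : tail_form w m sg -> tail_form w' m sg ->
  (forall i b, (i < m)%N -> w (i, b) = w' (i, b)) -> w = w'.
Proof.
case=> _ _ w0 [w1f w1t w2f w2t] w_supp [_ _ w0' [w1f' w1t' w2f' w2t'] w_supp'].
move=> w_low; apply: functional_extensionality => -[i b].
have [i_lt | ] := ltnP i m; first exact: w_low.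
rewrite leq_eqVlt => /predU1P [<- | ]; first by rewrite w0 w0'.
rewrite leq_eqVlt => /predU1P [<- | ]; first by case: b; rewrite ?w1f ?w1f' ?w1t ?w1t'.
rewrite leq_eqVlt => /predU1P [<- | i_gt]; first by case: b; rewrite ?w2f ?w2f' ?w2t ?w2t'.
by rewrite w_supp ?w_supp'.
Qed.

Lemma step1_inj w w' m sg sg' : tail_form w m sg -> tail_form w' m sg' ->
  step1 w m.+3 = step1 w' m.+3 -> w = w'.
Proof.
move=> tf tf' eq_step; have E e := congr1 (@^~ e) eq_step.
have [m_ge4 _ _ [_ w1t _ _] _] := tf; have [_ _ _ [_ w1t' _ _] _] := tf'.
have sg_eq : sg = sg'.
  by have := E (m.+1, true); rewrite !step1E; try lia; decide_ifs; rewrite w1t w1t'; lia.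
rewrite -sg_eq in tf'; apply: (tail_form_eq tf tf') => i b i_lt.
by have := E (i, b); rewrite !step1E; try lia; decide_ifs.
Qed.

Lemma step2_inj w w' m sg sg' : tail_form w m sg -> tail_form w' m sg' ->
  step2 w m.+3 = step2 w' m.+3 -> w = w'.
Proof.
move=> tf tf' eq_step; have E e := congr1 (@^~ e) eq_step.
have [m_ge4 _ _ [w1f _ _ _] _] := tf; have [_ _ _ [w1f' _ _ _] _] := tf'.
have sg_eq : sg = sg'.
  by have := E (m.+1, false); rewrite !step2E; try lia; decide_ifs; rewrite w1f w1f'; lia.
rewrite -sg_eq in tf'; apply: (tail_form_eq tf tf') => i b i_lt.
by have := E (i, b); rewrite !step2E; try lia; decide_ifs.
Qed.

Lemma step1_tag w m sg : tail_form w m sg -> step1 w m.+3 (m, false) = 0.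
Proof. by case=> m_ge4 *; rewrite step1E; try lia; decide_ifs. Qed.

Lemma step2_tag w m sg : tail_form w m sg -> step2 w m.+3 (m.+1, false) != 0.
Proof.
case=> m_ge4 sg_pm1 _ [w1f _ _ _] _.
by rewrite step2E; try lia; decide_ifs; rewrite w1f; case: sg_pm1 => ->.
Qed.

(* The state after s is (w_{g^s}, m), with m + 3 the largest adjacent vertex as
   in [tail_form]; letters other than 1 act as 2. *)
Definition gstep (st : weight * nat) (t : nat) : weight * nat :=
  if t == 1%N then (step1 st.1 st.2.+3, st.2.+2) else (step2 st.1 st.2.+3, st.2.+3).

Definition gstate (s : seq nat) : weight * nat := foldl gstep (g0, 4%N) s.

Lemma gstate_rcons s t : gstate (rcons s t) = gstep (gstate s) t.
Proof. exact: foldl_rcons. Qed.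

Lemma gstate_tail_form s : exists sg, tail_form (gstate s).1 (gstate s).2 sg.
Proof.
elim/last_ind: s => [|s t [sg tf]]; first by exists (-1); exact: tail_form_g0.
rewrite gstate_rcons /gstep; case: ifP => _ /=.
- by exists (- sg); exact: tail_form_step1.
- by exists sg; exact: tail_form_step2.
Qed.

Lemma gsP s w : gs s w <-> all in12 s /\ (gstate s).1 = w.
Proof.
split.
  elim=> [|s' _ k _ [s12 <-] largest | s' _ k _ [s12 <-] largest] //;
  have [sg tf] := gstate_tail_form s';
  rewrite all_rcons s12 gstate_rcons /gstep /=;
  by rewrite (largest_adjacent_uniq largest (tail_form_largest_adjacent tf)).
elim/last_ind: s w => [|s t IH] w [s12 <-]; first exact: gs_nil.
move: s12; rewrite all_rcons => /andP [t12 s12].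
have [sg tf] := gstate_tail_form s; have gs_s := IH _ (conj s12 erefl).
have largest := tail_form_largest_adjacent tf.
rewrite gstate_rcons /gstep; move: t12; rewrite /in12.
by case: eqP => [-> _ | _ /eqP ->] /=; [apply: gs_1 gs_s largest | apply: gs_2 gs_s largest].
Qed.

Lemma gstate_degree s d : all in12 s ->
  has_degree (gstate s).1 d <-> d = (4 + sumn s)%N.
Proof.
move=> s12.
have deg part : part = posp \/ part = negp ->
    monomial_degree part (gstate s).1 (gstate s).2.+3 = (4 + sumn s)%N.
  move=> part_pn; elim/last_ind: s s12 => [_ | s t IH].
    by rewrite /monomial_degree !big_ord_recr big_ord0; case: part_pn => ->.
  rewrite all_rcons sumn_rcons => /andP [t12 s12].
  have [sg tf] := gstate_tail_form s; rewrite gstate_rcons /gstep.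
  move: t12; rewrite /in12; case: eqP => [-> _ | _ /eqP ->] /=.
  - by rewrite (monomial_degree_step1 part_pn tf) IH // addnA addn1.
  - by rewrite (monomial_degree_step2 part_pn tf) IH // addnA.
have [_ [_ _ _ _ supp]] := gstate_tail_form s.
rewrite (has_degreeE _ supp) (deg posp (or_introl erefl)).
by rewrite (deg negp (or_intror erefl)) maxnn.
Qed.

Lemma gstep_inj st1 st2 t1 t2 sg1 sg2 :
  tail_form st1.1 st1.2 sg1 -> tail_form st2.1 st2.2 sg2 -> in12 t1 -> in12 t2 ->
  gstep st1 t1 = gstep st2 t2 -> st1 = st2 /\ t1 = t2.
Proof.
case: st1 st2 => [w1 m1] [w2 m2] /= tf1 tf2; rewrite /in12 /gstep /=.
case: eqP => [-> _ | _ /eqP ->]; case: eqP => [-> _ | _ /eqP ->] /= [eq_w eq_m].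
- have m_eq : m1 = m2 by lia.
  by subst m2; rewrite (step1_inj tf1 tf2 eq_w).
- have m_eq : m1 = m2.+1 by lia.
  by subst m1; have := step2_tag tf2; rewrite -eq_w (step1_tag tf1) eqxx.
- have m_eq : m2 = m1.+1 by lia.
  by subst m2; have := step2_tag tf1; rewrite eq_w (step1_tag tf2) eqxx.
- have m_eq : m1 = m2 by lia.
  by subst m2; rewrite (step2_inj tf1 tf2 eq_w).
Qed.

Lemma gstate_inj s1 s2 : all in12 s1 -> all in12 s2 ->
  (gstate s1).1 = (gstate s2).1 -> s1 = s2.
Proof.
have gstate_eq s s' : (gstate s).1 = (gstate s').1 -> gstate s = gstate s'.
  have [sg tf] := gstate_tail_form s; have [sg' tf'] := gstate_tail_form s'.
  move=> eq_w; have := tail_form_largest_adjacent tf'; rewrite -eq_w => largest.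
  have [] := largest_adjacent_uniq (tail_form_largest_adjacent tf) largest.
  by case: (gstate s) eq_w => w m; case: (gstate s') => w' m' /= -> ->.
have gstate_rcons_gt s t : (4 < (gstate (rcons s t)).2)%N.
  have [_ [m_ge4 _ _ _ _]] := gstate_tail_form s.
  by rewrite gstate_rcons /gstep; case: ifP => _ /=; lia.
elim/last_ind: s1 s2 => [|s1 t1 IH] s2; case/lastP: s2 => [|s2 t2] // s1_12 s2_12.
- by move/gstate_eq/(congr1 snd) => /= eq_m; have := gstate_rcons_gt s2 t2; rewrite -eq_m.
- by move/gstate_eq/(congr1 snd) => /= eq_m; have := gstate_rcons_gt s1 t1; rewrite eq_m.
move: s1_12 s2_12; rewrite !all_rcons => /andP [t1_12 s1_12] /andP [t2_12 s2_12].
have [sg1 tf1] := gstate_tail_form s1; have [sg2 tf2] := gstate_tail_form s2.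
move/gstate_eq; rewrite !gstate_rcons => /(gstep_inj tf1 tf2 t1_12 t2_12) [eq_st ->].
by rewrite (IH s2) // eq_st.
Qed.

Theorem corollary6p6 (d : nat) : (3 <= d)%N ->
  exists f : 'I_(fib (d - 3)) -> weight,
    injective f /\
    forall w : weight, (in_Gprime w /\ has_degree w d) <-> exists i, f i = w.
Proof.
move=> d_ge3.
have G'_deg w : in_Gprime w /\ has_degree w d <->
    exists2 s, s \in comp12 (d - 3) & (gstate s).1 = w.
  split=> [[[s /gsP [s12 <-]]] | [s]].
    by rewrite gstate_degree // => ->; exists s; rewrite // mem_comp12 s12 /=; lia.
  rewrite mem_comp12 => /andP [s12 /eqP sum_s] <-; split; first by exists s; apply/gsP.
  by rewrite gstate_degree //; lia.
have gstate_inj_comp : {in comp12 (d - 3) &, injective (fun s => (gstate s).1)}.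
  by move=> s1 s2; rewrite !mem_comp12 => /andP [s1_12 _] /andP [s2_12 _]; apply: gstate_inj.
have := ordinal_enumeration (uniq_comp12 (d - 3)) gstate_inj_comp.
rewrite size_comp12 => -[f [f_inj f_range]]; exists f; split=> // w.
by rewrite G'_deg.
Qed.
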